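(* Let $(X,G)$ be a minimal topological dynamical system. The set $\mathcal V=\{F\in 2^X: V(F)=\pi_{eq}(F)\}$ is a compact $G$-invariant subset of $2^X$.
   Context: $G$ is an infinite countable discrete group; a tds $(X,G)$ is a compact metric space with a $G$-action by homeomorphisms; minimal means no proper nonempty closed invariant subset. $\pi_{eq}:X\to X_{eq}$ is the factor map onto the maximal equicontinuous factor, $\nu_{eq}$ the unique invariant probability measure of $(X_{eq},G)$. $2^X$ is the space of nonempty closed subsets with the Hausdorff metric $d_H$, with action $gA=\{ga:a\in A\}$. $\mathcal X=\overline{\{\pi_{eq}^{-1}(y):y\in X_{eq}\}}\subset 2^X$; for $E\in\mathcal X$, $\pi_{\mathcal X}(E)$ is the single point $\pi_{eq}(E)$. $\mathcal X_{eq}^{\mathrm{meas}}=\{E\in\mathcal X:\nu_{eq}(\pi_{\mathcal X}(B^{\mathcal X}_\epsilon(E)))>0\ \forall\epsilon>0\}$, $B^{\mathcal X}_\epsilon(E)$ the open $d_H$-ball in $\mathcal X$. For $F\in 2^X$, $V(F)=\{y\in X_{eq}:\exists E\in\mathcal X_{eq}^{\mathrm{meas}}, E\subset F,\ \pi_{\mathcal X}(E)=y\}$. *)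

From HB Require Import structures.
From mathcomp Require Import all_boot all_order all_algebra.
From mathcomp Require Import all_classical all_reals all_analysis.
Set Implicit Arguments. Unset Strict Implicit. Unset Printing Implicit Defensive.
Import Order.TTheory GRing.Theory Num.Theory.
Local Open Scope classical_set_scope.
Local Open Scope ring_scope.

(* metric spaces with a distinguished point (needed to build the Borel
   measurable structure g_sigma_algebraType); X_eq is nonempty anyway *)
#[short(type="pmetricType")]
HB.structure Definition PointedMetric (K : numDomainType) :=
  { M of Metric K M & isPointed M }.

Record group_law (G : Type) := GroupLaw {
  gmul : G -> G -> G;
  gone : G;
  ginv : G -> G;
  gmulA : forall a b c, gmul a (gmul b c) = gmul (gmul a b) c;
  gmul1 : forall a, gmul gone a = a;
  gmulV : forall a, gmul (ginv a) a = gone }.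

Definition infinite_countable_group (G : countType) (Gr : group_law G) :=
  infinite_set [set: G].

(* act is an action of the group by homeomorphisms (each act g is continuous,
   and act g^-1 is its continuous inverse by the action laws). *)
Definition is_action {G : Type} (Gr : group_law G) {T : topologicalType}
  (act : G -> T -> T) :=
  [/\ forall x, act (gone Gr) x = x,
      forall g h x, act (gmul Gr g h) x = act g (act h x)
    & forall g, continuous (act g)].

Definition tds {R : realType} {G : Type} (Gr : group_law G) (T : metricType R)
  (act : G -> T -> T) := compact [set: T] /\ is_action Gr act.

Definition minimal {G : Type} {T : topologicalType} (act : G -> T -> T) :=
  forall A : set T, closed A -> A !=set0 ->
    (forall g, act g @` A `<=` A) -> A = setT.

Definition equicontinuous_sys {R : realType} {G : Type} {T : metricType R}
  (act : G -> T -> T) :=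
  forall eps : R, 0 < eps -> exists2 delta : R, 0 < delta &
    forall x y g, mdist x y < delta -> mdist (act g x) (act g y) < eps.

Definition factor_map {G : Type} {X Y : topologicalType}
  (actX : G -> X -> X) (actY : G -> Y -> Y) (p : X -> Y) :=
  [/\ continuous p, (forall y, exists x, p x = y) & forall g x, p (actX g x) = actY g (p x)].

Definition max_equicontinuous_factor {R : realType} {G : Type}
  (Gr : group_law G) {X : metricType R} {Xeq : pmetricType R} (act : G -> X -> X)
  (acteq : G -> Xeq -> Xeq) (pi : X -> Xeq) :=
  [/\ tds Gr acteq, equicontinuous_sys acteq, factor_map act acteq pi &
      forall (Y : metricType R) (actY : G -> Y -> Y) (p : X -> Y),
        tds Gr actY -> equicontinuous_sys actY -> factor_map act actY p ->
        exists q : Xeq -> Y, continuous q /\ forall x, p x = q (pi x)].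

Notation borel_type T := (g_sigma_algebraType (@open T)).

Definition invariant_prob {R : realType} {G : Type} {T : pmetricType R}
  (act : G -> T -> T) (mu : probability (borel_type T) R) :=
  forall g (A : set (borel_type T)), measurable A ->
    mu (act g @^-1` A) = mu A.

Definition unique_invariant_prob {R : realType} {G : Type} {T : pmetricType R}
  (act : G -> T -> T) (nu : probability (borel_type T) R) :=
  invariant_prob act nu /\
  forall mu : probability (borel_type T) R, invariant_prob act mu ->
    forall A : set (borel_type T), measurable A -> mu A = nu A.

Section hyperspace.
Context {R : realType} {X : metricType R}.

(* elements of 2^X : nonempty closed subsets *)
Definition hyp (A : set X) := closed A /\ A !=set0.

(* d_H(E, F) < eps, for E, F compact (nonempty closed in compact X): since
   the sups/infs in the definition of d_H are attained, this is exactly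
   every point of each set is at distance < eps from some point of the other *)
Definition hball (eps : R) (E F : set X) :=
  (forall x, E x -> exists2 y, F y & mdist x y < eps) /\
  (forall y, F y -> exists2 x, E x & mdist y x < eps).

Definition hopen (U : set (set X)) :=
  U `<=` hyp /\
  forall F, U F -> exists2 eps : R, 0 < eps &
    forall F', hyp F' -> hball eps F F' -> U F'.

Definition hcompact (K : set (set X)) :=
  K `<=` hyp /\
  forall (I : Type) (U : I -> set (set X)), (forall i, hopen (U i)) ->
    K `<=` \bigcup_i U i ->
    exists2 D : set I, finite_set D & K `<=` \bigcup_(i in D) U i.

Definition hact {G : Type} (act : G -> X -> X) (g : G) (A : set X) := act g @` A.
End hyperspace.

Section fibres.
Context {R : realType} {X : metricType R} {Xeq : pmetricType R} (pi : X -> Xeq)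
  (nu : probability (borel_type Xeq) R).

(* calX = closure in 2^X of the fibres pi^-1(y) *)
Definition calX : set (set X) :=
  [set E | hyp E /\ forall eps : R, 0 < eps ->
     exists y : Xeq, hball eps E (pi @^-1` [set y])].

(* pi_calX (B^calX_eps(E)) : the points pi(F), F in calX, d_H(E,F) < eps *)
Definition piX_ball (eps : R) (E : set X) : set Xeq :=
  [set y | exists F, [/\ calX F, hball eps E F & pi @` F = [set y]]].

Definition calX_meas : set (set X) :=
  [set E | calX E /\ forall eps : R, 0 < eps ->
     (0 < nu (piX_ball eps E : set (borel_type Xeq)))%E].

Definition Vset (F : set X) : set Xeq :=
  [set y | exists E, [/\ calX_meas E, E `<=` F & pi @` E = [set y]]].

Definition calV : set (set X) := [set F | hyp F /\ Vset F = pi @` F].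
End fibres.

From HB Require Import structures.
From mathcomp Require Import all_boot all_order all_algebra.
From mathcomp Require Import all_classical all_reals all_analysis.
From mathcomp Require Import finmap lra.
Set Implicit Arguments. Unset Strict Implicit. Unset Printing Implicit Defensive.
Import Order.TTheory GRing.Theory Num.Theory.
Local Open Scope classical_set_scope.
Local Open Scope ring_scope.

(* For an ultrafilter U on 2^X let hlim U be the set of points each of whose
   neighbourhoods meets U-almost every F.  Covering the compact space X by
   finitely many small balls and letting U decide each of them shows that
   U-almost every F is eps-close to hlim U in the Hausdorff metric, for every
   eps > 0.  Hence a family of nonempty closed sets that contains hlim U
   whenever U is concentrated on it is compact, and calV is such a family.
   - calX: limits of near-fibres are near-fibres.
   - calX_meas: pi_calX(B_eps(E)) is Borel, being the union over r < eps of
     the closed sets closure(pi_calX(B_r(E))) (the Hausdorff distance between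
     compact sets is attained), and it contains pi_calX(B_{eps/2}(F)) as
     soon as d_H(E, F) < eps/2.
   - calV: a point pi(x) of pi(hlim U) is approximated by measurable fibres
     E contained in members of calV close to hlim U; an ultralimit of these E
     is a measurable fibre over pi(x) inside hlim U.
   Invariance: g acts by a uniformly continuous homeomorphism which commutes
   with pi, so it maps fibres to fibres and Hausdorff balls into Hausdorff
   balls, and nu is g-invariant. *)

Section metric.
Context {R : realType} {X : metricType R}.

Lemma nbhs_mdist_ltP (x : X) (P : set X) :
  nbhs x P <-> exists2 r : R, 0 < r & forall y, mdist x y < r -> P y.
Proof.
rewrite -metricType_numDomainType.filter_from_mdist_nbhs /filter_from /=.
by split=> -[r r0 H]; exists r => // y /H.
Qed.

Lemma closed_mdistP (A : set X) :
  closed A <-> forall x, (forall e : R, 0 < e -> exists2 a, A a & mdist x a < e) -> A x.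
Proof.
split=> [/closure_id Aid x Ax|Acl].
  rewrite Aid => B /nbhs_mdist_ltP [r r0 Br].
  by have [a Aa xa] := Ax r r0; exists a; split=> //; exact: Br.
apply/closure_id/seteqP; split=> [|x clx]; first exact: subset_closure.
apply: Acl => e e0; have [|a [Aa xa]] := clx [set y | mdist x y < e].
  by apply/nbhs_mdist_ltP; exists e.
by exists a.
Qed.

Lemma mdist_ltD (x y z : X) (a b : R) :
  mdist x y < a -> mdist y z < b -> mdist x z < a + b.
Proof. by move=> xy yz; apply: le_lt_trans (metric_triangle x y z) _; exact: ltrD. Qed.

Lemma mdist_lt_eq (x y : X) : (forall e : R, 0 < e -> mdist x y < e) -> x = y.
Proof.
move=> xy; apply: mdist_positivity; apply/eqP; rewrite eq_le mdist_ge0 andbT.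
by apply/ler_addgt0Pr => e e0; rewrite add0r ltW ?xy.
Qed.

Lemma closed_mdist_le (z : X) (c : R) : closed [set y | mdist z y <= c].
Proof.
apply/closed_mdistP => x xc /=; apply/ler_addgt0Pr => e e0.
have [a za xa] := xc e e0.
by apply: le_trans (metric_triangle z a x) _; rewrite lerD // metric_sym ltW.
Qed.

Lemma closed_notin_ball (C : set X) (x : X) : closed C -> ~ C x ->
  exists2 r : R, 0 < r & forall y, mdist x y < r -> ~ C y.
Proof.
move=> /closed_mdistP Ccl nCx; apply: contrapT => nr; apply/nCx/Ccl => e e0.
by apply: contrapT => ne; apply: nr; exists e => // y xy Cy; apply: ne; exists y.
Qed.

Lemma seq_lb_gt0 (T : eqType) (s : seq T) (r : T -> R) : (forall x, 0 < r x) ->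
  exists2 d : R, 0 < d & forall z, z \in s -> d <= r z.
Proof.
move=> r0; elim: s => [|a s [d d0 ds]]; first by exists 1.
exists (Order.min d (r a)); first by rewrite lt_min d0 r0.
by move=> z; rewrite inE => /orP[/eqP ->|/ds zs]; rewrite ge_min ?lexx ?orbT ?zs.
Qed.

End metric.

Section compact_metric.
Context {R : realType} {X : metricType R}.
Hypothesis cX : compact [set: X].

Lemma compact_finite_net (r : X -> R) : (forall x, 0 < r x) ->
  exists s : {fset X}, forall x, exists2 z, z \in s & mdist z x < r z.
Proof.
move=> r0; apply: contrapT => nnet.
pose B (s : {fset X}) := [set x | forall z, z \in s -> ~ mdist z x < r z].
have FF : ProperFilter (filter_from [set: {fset X}] B).
  apply: filter_from_proper => [|s _]; last first.
    apply: contrapT => nBs; apply: nnet; exists s => x; apply: contrapT => nx.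
    by apply: nBs; exists x => z zs zx; apply: nx; exists z.
  apply: filter_from_filter => [|s t _ _]; first by exists fset0.
  exists (s `|` t)%fset => // x Bx.
  by split=> z zst; apply: Bx; rewrite in_fsetU zst ?orbT.
have [p [_ clp]] := cX FF filterT.
have pr : nbhs p [set y | mdist p y < r p] by apply/nbhs_mdist_ltP; exists (r p).
have [x [Bx px]] := clp _ _ (ex_intro2 _ _ [fset p]%fset I (fun _ h => h)) pr.
by apply: (Bx p) => //; rewrite in_fset1.
Qed.

Lemma compact_unif_cont (Y : metricType R) (f : X -> Y) : continuous f ->
  forall e : R, 0 < e ->
  exists2 d : R, 0 < d & forall x y, mdist x y < d -> mdist (f x) (f y) < e.
Proof.
move=> fc e e0; have e2 : 0 < e / 2 by rewrite divr_gt0.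
have /choice [r rP] : forall z, exists r : R, 0 < r /\
    forall y, mdist z y < r -> mdist (f z) (f y) < e / 2.
  move=> z; have /fc /nbhs_mdist_ltP [r r0 rf] :
      nbhs (f z) [set w | mdist (f z) w < e / 2].
    by apply/nbhs_mdist_ltP; exists (e / 2).
  by exists r; split=> // y /rf.
have r0 x : 0 < r x / 2 by rewrite divr_gt0 //; case: (rP x).
have [s snet] := compact_finite_net r0.
have [d d0 ds] := seq_lb_gt0 s r0.
exists d => // x y xy; have [z zs zx] := snet x.
have zx' : mdist z x < r z by have := (rP z).1; lra.
have zy : mdist z y < r z.
  by apply: lt_le_trans (mdist_ltD zx xy) _; rewrite [leRHS]splitr lerD ?ds.
have fxz := (rP z).2 x zx'; rewrite metric_sym in fxz.
by rewrite [e]splitr; exact: mdist_ltD fxz ((rP z).2 y zy).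
Qed.

End compact_metric.

Section hyperspace.
Context {R : realType} {X : metricType R}.

Definition hnear (eps : R) (E F : set X) :=
  forall x, E x -> exists2 y, F y & mdist x y < eps.

Lemma hnear_le (a b : R) (E F : set X) : a <= b -> hnear a E F -> hnear b E F.
Proof. by move=> ab EF x /EF [y Fy xy]; exists y => //; exact: lt_le_trans ab. Qed.

Lemma hnear_trans (a b : R) (E F H : set X) :
  hnear a E F -> hnear b F H -> hnear (a + b) E H.
Proof.
by move=> EF FH x /EF [y /FH [z Hz yz] xy]; exists z => //; exact: mdist_ltD xy yz.
Qed.

Lemma hball_le (a b : R) (E F : set X) : a <= b -> hball a E F -> hball b E F.
Proof. by move=> ab [EF FE]; split; exact: hnear_le ab _. Qed.

Lemma hball_trans (a b : R) (E F H : set X) :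
  hball a E F -> hball b F H -> hball (a + b) E H.
Proof.
move=> [EF FE] [FH HF]; split; first exact: hnear_trans EF FH.
by rewrite addrC; exact: hnear_trans HF FE.
Qed.

Hypothesis cX : compact [set: X].

Lemma hnear_slack (eps : R) (E F : set X) : closed E -> hnear eps E F ->
  exists2 d : R, 0 < d & hnear (eps - d) E F.
Proof.
move=> Ecl EF.
have /choice [s sP] : forall x, exists s : R, 0 < s /\
    forall x', mdist x x' < s -> E x' -> exists2 y, F y & mdist x' y < eps - s.
  move=> x; have [Ex|nEx] := pselect (E x); last first.
    by have [r r0 rE] := closed_notin_ball Ecl nEx; exists r; split=> // x' /rE.
  have [y Fy xy] := EF x Ex; exists ((eps - mdist x y) / 2).
  split=> [|x' xx' _]; first by rewrite divr_gt0 // subr_gt0.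
  exists y => //; apply: le_lt_trans (metric_triangle x' x y) _.
  by rewrite metric_sym; lra.
have s0 x : 0 < s x by case: (sP x).
have [t tnet] := compact_finite_net cX s0.
have [d d0 dt] := seq_lb_gt0 t s0.
exists d => // x Ex; have [z zt zx] := tnet x.
have [y Fy xy] := (sP z).2 x zx Ex; exists y => //.
by apply: lt_le_trans xy _; rewrite lerB ?dt.
Qed.

Lemma hball_slack (eps : R) (E F : set X) : closed E -> closed F ->
  hball eps E F -> exists2 r : R, r < eps & hball r E F.
Proof.
move=> Ecl Fcl [EF FE].
have [d1 d10 EF1] := hnear_slack Ecl EF; have [d2 d20 FE2] := hnear_slack Fcl FE.
exists (eps - Order.min d1 d2); first by rewrite ltrBlDr ltrDl lt_min d10 d20.
by split; [apply: hnear_le EF1|apply: hnear_le FE2]; rewrite lerB // ge_min lexx ?orbT.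
Qed.

End hyperspace.

Section ultralimit.
Context {R : realType} {X : metricType R}.

Definition hmeets (x : X) (r : R) : set (set X) :=
  [set F | exists2 y, F y & mdist x y < r].

Definition hlim (U : set_system (set X)) : set X :=
  [set x | forall r : R, 0 < r -> U (hmeets x r)].

Hypothesis cX : compact [set: X].
Context (U : set_system (set X)) (UU : UltraFilter U).

Lemma hlim_meets_closed (C : set X) : closed C ->
  U [set F | exists2 y, F y & C y] -> exists2 x, C x & hlim U x.
Proof.
move=> Ccl UC; apply: contrapT => nCL.
have /choice [r rP] : forall x, exists r : R, 0 < r /\
    ((forall y, mdist x y < r -> ~ C y) \/ U (~` hmeets x r)).
  move=> x; have [Cx|nCx] := pselect (C x); last first.
    by have [r r0 rC] := closed_notin_ball Ccl nCx; exists r; split=> //; left.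
  have /existsNP [r /not_implyP [r0 nUr]] : ~ hlim U x by move=> Lx; apply: nCL; exists x.
  by exists r; split=> //; right; case: (in_ultra_setVsetC (hmeets x r) UU).
have r0 x : 0 < r x by case: (rP x).
have [s snet] := compact_finite_net cX r0.
pose Q z := [set F | (forall y, mdist z y < r z -> ~ C y) \/ ~ hmeets z (r z) F].
have UQ : U (\bigcap_(z in [set` s]) Q z).
  apply: filter_bigI => z _; case: (rP z) => _ [zC|Uz].
    by apply: filterE => F; left.
  by apply: filterS _ Uz => F; right.
have [F [[y Fy Cy] QF]] := filter_ex (filterI UC UQ).
have [z zs zy] := snet y; case: (QF z zs) => [zC|]; first exact: zC y zy Cy.
by apply; exists y.
Qed.

Lemma hlim_hnear (eps : R) : 0 < eps -> U [set F | hnear eps (hlim U) F].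
Proof.
move=> e0; have e4 : 0 < eps / 4 by rewrite divr_gt0.
have e2 : 0 < eps / 2 by rewrite divr_gt0.
have [s snet] := compact_finite_net cX (fun=> e4).
pose Q z := [set F | (forall x, hlim U x -> ~ mdist z x < eps / 4) \/
  exists2 x, hlim U x /\ mdist z x < eps / 4 & hmeets x (eps / 2) F].
have UQ : U (\bigcap_(z in [set` s]) Q z).
  apply: filter_bigI => z _.
  have [[x [Lx zx]]|nx] := pselect (exists x, hlim U x /\ mdist z x < eps / 4).
    by apply: filterS _ (Lx _ e2) => F xF; right; exists x.
  by apply: filterE => F; left => x Lx zx; apply: nx; exists x.
apply: filterS _ UQ => F QF x Lx; have [z zs zx] := snet x.
case: (QF z zs) => [nz|[x' [Lx' zx'] [y Fy x'y]]]; first by case: (nz x Lx zx).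
exists y => //; rewrite metric_sym in zx.
have := mdist_ltD (mdist_ltD zx zx') x'y.
by have -> : eps / 4 + eps / 4 + eps / 2 = eps by lra.
Qed.

Lemma hnear_hlim (eps : R) : 0 < eps -> U [set F | hnear eps F (hlim U)].
Proof.
move=> e0; have e3 : 0 < eps / 3 by rewrite divr_gt0.
have [s snet] := compact_finite_net cX (fun=> e3).
pose Q z := [set F | (exists2 x, hlim U x & mdist z x <= eps / 3) \/
  forall y, F y -> ~ mdist z y < eps / 3].
(* If hlim U misses the closed eps/3-ball around z, then by hlim_meets_closed
   U-almost every F misses it as well. *)
have UQ : U (\bigcap_(z in [set` s]) Q z).
  apply: filter_bigI => z _.
  have [zL|nzL] := pselect (exists2 x, hlim U x & mdist z x <= eps / 3).
    by apply: filterE => F; left.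
  have [Uz|] := in_ultra_setVsetC [set F | forall y, F y -> ~ mdist z y < eps / 3] UU.
    by apply: filterS _ Uz => F; right.
  move=> UnQ; have : U [set F | exists2 y, F y & mdist z y <= eps / 3].
    apply: filterS _ UnQ => F nF; apply: contrapT => nex; apply: nF => y Fy zy.
    by apply: nex; exists y => //; exact: ltW.
  move=> /(hlim_meets_closed (closed_mdist_le (z := z) (c := eps / 3))) [x zx Lx].
  by case: nzL; exists x.
apply: filterS _ UQ => F QF y Fy; have [z zs zy] := snet y.
case: (QF z zs) => [[x Lx zx]|nz]; last by case: (nz y Fy zy).
exists x => //; rewrite metric_sym in zy.
apply: le_lt_trans (metric_triangle y z x) _; lra.
Qed.

Lemma hlim_hball (eps : R) : 0 < eps -> U [set F | hball eps (hlim U) F].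
Proof. by move=> e0; apply: filterS _ (filterI (hlim_hnear e0) (hnear_hlim e0)). Qed.

Lemma hyp_hlim : U hyp -> hyp (hlim U).
Proof.
move=> Uh; split.
  apply/closed_mdistP => x xL r r0; have r2 : 0 < r / 2 by rewrite divr_gt0.
  have [a La xa] := xL _ r2; apply: filterS _ (La _ r2) => F [y Fy ay].
  by exists y => //; rewrite [r]splitr; exact: mdist_ltD xa ay.
have [F [[_ [y Fy]] FL]] := filter_ex (filterI Uh (hnear_hlim ltr01)).
by have [x Lx _] := FL y Fy; exists x.
Qed.

End ultralimit.

Lemma ultraFilter_from_monotone {R : realType} {T : Type} (P : R -> set T) :
  (forall d1 d2, 0 < d1 -> d1 <= d2 -> P d1 `<=` P d2) ->
  (forall d, 0 < d -> P d !=set0) ->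
  exists U, UltraFilter U /\ forall d, 0 < d -> U (P d).
Proof.
move=> Pmono P0.
have FF : ProperFilter (filter_from [set d : R | 0 < d] P).
  apply: filter_from_proper => //; apply: filter_from_filter => [|i j i0 j0].
    by exists 1; rewrite /= ltr01.
  have m0 : 0 < Order.min i j by rewrite lt_min i0 j0.
  exists (Order.min i j) => // F PF.
  by split; apply: Pmono m0 _ _ PF; rewrite ge_min lexx ?orbT.
have [U [UU FU]] := ultraFilterLemma FF.
by exists U; split=> // d d0; apply: FU; exists d.
Qed.

Lemma hcompact_ultra {R : realType} {X : metricType R} (K : set (set X)) :
  compact [set: X] -> K `<=` hyp ->
  (forall U, UltraFilter U -> U K -> K (hlim U)) -> hcompact K.
Proof.
move=> cX Khyp Klim; split=> // I V Vopen KV; apply: contrapT => nfin.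
pose B (D : set I) := K `\` \bigcup_(i in D) V i.
have FF : ProperFilter (filter_from [set D : set I | finite_set D] B).
  apply: filter_from_proper => [|D Dfin].
    apply: filter_from_filter => [|D1 D2 D1fin D2fin].
      by exists set0; exact: finite_set0.
    exists (D1 `|` D2); first by rewrite /= finite_setU.
    by move=> F [KF nV]; split; split=> // -[i Di ViF];
      apply: nV; exists i => //; [left|right].
  apply: contrapT => nB; apply: nfin; exists D => // F KF.
  by apply: contrapT => nF; apply: nB; exists F.
have [U [UU FU]] := ultraFilterLemma FF.
have UK : U K by apply: FU; exists set0 => [|F []]; first exact: finite_set0.
have [i _ ViL] := KV _ (Klim U UU UK).
have [eps e0 epsV] := (Vopen i).2 _ ViL.
have UB : U (B [set i]) by apply: FU; exists [set i] => //; exact: finite_set1.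
have [F [[KF LF] [_ nV]]] := filter_ex (filterI (filterI UK (hlim_hball cX UU e0)) UB).
by apply: nV; exists i => //; apply: epsV LF; exact: Khyp.
Qed.

Section borel.
Context {T : ptopologicalType}.

Lemma closed_borel (A : set T) : closed A -> measurable (A : set (borel_type T)).
Proof.
move=> Acl; rewrite -(setCK A); apply: measurableC.
by apply: sub_sigma_algebra; exact: closed_openC.
Qed.

Lemma continuous_borel_preimage (f : T -> T) : continuous f ->
  forall B : set (borel_type T), measurable B ->
  measurable (f @^-1` B : set (borel_type T)).
Proof.
move=> fc B mB.
have mf : measurable_fun (setT : set (borel_type T)) (f : borel_type T -> borel_type T).
  have := @measurability _ _ (borel_type T) (borel_type T) setT f (@open T) erefl.
  apply=> _ [A Aopen <-]; rewrite setTI.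
  by apply: sub_sigma_algebra; move/continuousP: fc; apply.
by have := mf measurableT B mB; rewrite setTI.
Qed.

End borel.

Section fibres.
Context {R : realType} {X : metricType R} {Xeq : pmetricType R} (pi : X -> Xeq)
  (nu : probability (borel_type Xeq) R).

Definition fibre_near (y : Xeq) (d : R) : set (set X) :=
  [set F | exists2 y', pi @` F = [set y'] & mdist y y' < d].

Lemma fibre_near_le (y : Xeq) (d1 d2 : R) : d1 <= d2 ->
  fibre_near y d1 `<=` fibre_near y d2.
Proof. by move=> d12 F [y' Fy' yy']; exists y' => //; exact: lt_le_trans d12. Qed.

Lemma Vset_sub_image (F : set X) : Vset pi nu F `<=` pi @` F.
Proof.
move=> y [E [_ EF piE]]; have : (pi @` E) y by rewrite piE.
by case=> x Ex <-; exists x => //; exact: EF.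
Qed.

Hypotheses (cX : compact [set: X]) (pic : continuous pi).

Lemma pi_hlim (U : set_system (set X)) (UU : UltraFilter U) (y : Xeq) :
  U hyp -> (forall d : R, 0 < d -> U (fibre_near y d)) -> pi @` hlim U = [set y].
Proof.
move=> Uh Uy; have [_ [x0 Lx0]] := hyp_hlim cX UU Uh.
suff piL x : hlim U x -> pi x = y.
  by apply/seteqP; split=> [_ [x Lx <-]|_ ->]; [rewrite /= piL | exists x0; rewrite ?piL].
move=> Lx; apply/esym/mdist_lt_eq => e e0; have e2 : 0 < e / 2 by rewrite divr_gt0.
have [d d0 dpi] := compact_unif_cont cX pic e2.
have [F [[LF _] [y' piF yy']]] := filter_ex (filterI (hlim_hball cX UU d0) (Uy _ e2)).
have [x' Fx' xx'] := LF x Lx; have : (pi @` F) (pi x') by exists x'.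
rewrite piF => /= px'; have := dpi _ _ xx'; rewrite px' metric_sym => y'x.
by rewrite [e]splitr; exact: mdist_ltD yy' y'x.
Qed.

Lemma hlim_calX (U : set_system (set X)) (UU : UltraFilter U) :
  U (calX pi) -> calX pi (hlim U).
Proof.
move=> UX; have Uh : U hyp by apply: filterS _ UX => F [].
split=> [|e e0]; first by have := hyp_hlim cX UU Uh.
have e2 : 0 < e / 2 by rewrite divr_gt0.
have [F [LF [_ /(_ _ e2) [y Fy]]]] := filter_ex (filterI (hlim_hball cX UU e2) UX).
by exists y; rewrite [e]splitr; exact: hball_trans LF Fy.
Qed.

Lemma closure_piX_ball (r eps : R) (E : set X) : r < eps ->
  closure (piX_ball pi r E) `<=` piX_ball pi eps E.
Proof.
move=> reps y cly.
pose P d := [set F | calX pi F /\ hball r E F] `&` fibre_near y d.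
have [U [UU UP]] : exists U, UltraFilter U /\ forall d, 0 < d -> U (P d).
  apply: ultraFilter_from_monotone => [d1 d2 _ d12 F [EF /(fibre_near_le d12) Fy]|d d0].
    by split.
  have [|y' [[F [XF EF piF]] yy']] := cly [set y' | mdist y y' < d].
    by apply/nbhs_mdist_ltP; exists d.
  by exists F; split; [split|exists y'].
have Uh : U hyp by apply: filterS _ (UP _ ltr01) => F [[[]]].
exists (hlim U); split.
- by apply: (hlim_calX UU); apply: filterS _ (UP _ ltr01) => F [[]].
- have er : 0 < eps - r by rewrite subr_gt0.
  have [F [LF [[_ EF] _]]] := filter_ex (filterI (hlim_hball cX UU er) (UP _ ltr01)).
  by have := hball_trans EF (conj LF.2 LF.1); rewrite addrC subrK.
- by apply: (pi_hlim UU Uh) => d d0; apply: filterS _ (UP _ d0) => F [].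
Qed.

Lemma piX_ball_closure_bigcup (eps : R) (E : set X) : hyp E ->
  piX_ball pi eps E = \bigcup_n closure (piX_ball pi (eps - n.+1%:R^-1) E).
Proof.
move=> Ehyp; apply/seteqP; split=> [y [F [XF EF piF]]|y [n _ /closure_piX_ball]].
  2: by apply; rewrite ltrBlDr ltrDl invr_gt0 ltr0n.
have [r reps EFr] := hball_slack cX Ehyp.1 XF.1.1 EF.
have er : 0 < eps - r by rewrite subr_gt0.
exists (Num.truncn (eps - r)^-1) => //; apply: subset_closure; exists F; split=> //.
apply: hball_le EFr; rewrite lerBrDr -lerBrDl ltW // -[ltRHS]invrK.
by rewrite ltf_pV2 ?posrE ?invr_gt0 // truncnS_gt.
Qed.

Lemma measurable_piX_ball (eps : R) (E : set X) : hyp E ->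
  measurable (piX_ball pi eps E : set (borel_type Xeq)).
Proof.
move=> Ehyp; rewrite piX_ball_closure_bigcup //.
by apply: bigcupT_measurable => n; apply: closed_borel; exact: closed_closure.
Qed.

Lemma hlim_calX_meas (U : set_system (set X)) (UU : UltraFilter U) :
  U (calX_meas pi nu) -> calX_meas pi nu (hlim U).
Proof.
move=> UM; have Uh : U hyp by apply: filterS _ UM => F [[]].
split=> [|e e0]; first by apply: (hlim_calX UU); apply: filterS _ UM => F [].
have e2 : 0 < e / 2 by rewrite divr_gt0.
have [F [LF [XF /(_ _ e2) nuF]]] := filter_ex (filterI (hlim_hball cX UU e2) UM).
apply: lt_le_trans nuF _; apply: le_measure.
- by apply/mem_set; exact: measurable_piX_ball _ XF.1.
- by apply/mem_set; exact: measurable_piX_ball _ (hyp_hlim cX UU Uh).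
move=> y [F' [XF' FF' piF']]; exists F'; split=> //.
by rewrite [e]splitr; exact: hball_trans LF FF'.
Qed.

Lemma calV_fibre_approx (U : set_system (set X)) (UU : UltraFilter U) (x : X) (d : R) :
  U (calV pi nu) -> hlim U x -> 0 < d ->
  exists E, [/\ calX_meas pi nu E, fibre_near (pi x) d E &
    exists2 F, calV pi nu F /\ hball d (hlim U) F & E `<=` F].
Proof.
move=> UV Lx d0; have [d1 d10 d1pi] := compact_unif_cont cX pic d0.
have m0 : 0 < Order.min d d1 by rewrite lt_min d0 d10.
have [F [LF VF]] := filter_ex (filterI (hlim_hball cX UU m0) UV).
have [x' Fx' xx'] := LF.1 x Lx; have : (pi @` F) (pi x') by exists x'.
rewrite -VF.2 => -[E [ME EF piE]]; exists E; split=> //.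
  exists (pi x') => //; apply: d1pi.
  by apply: lt_le_trans xx' _; rewrite ge_min lexx orbT.
by exists F => //; split=> //; apply: hball_le LF; rewrite ge_min lexx.
Qed.

Lemma hlim_calV (U : set_system (set X)) (UU : UltraFilter U) :
  U (calV pi nu) -> calV pi nu (hlim U).
Proof.
move=> UV; have Uh : U hyp by apply: filterS _ UV => F [].
have Lhyp := hyp_hlim cX UU Uh.
split=> //; apply/seteqP; split=> [|_ [x Lx <-]]; first exact: Vset_sub_image.
pose P d := [set E | calX_meas pi nu E /\ fibre_near (pi x) d E /\
  exists2 F, calV pi nu F /\ hball d (hlim U) F & E `<=` F].
have [W [WU WP]] : exists W, UltraFilter W /\ forall d, 0 < d -> W (P d).
  apply: ultraFilter_from_monotone => [d1 d2 _ d12 E [ME [Ex [F [VF LF] EF]]]|d d0].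
    split=> //; split; first exact: fibre_near_le Ex.
    by exists F => //; split=> //; exact: hball_le LF.
  by have [E [ME Ex EF]] := calV_fibre_approx UU UV Lx d0; exists E.
have Wh : W hyp by apply: filterS _ (WP _ ltr01) => E [[[]]].
exists (hlim W); split.
- by apply: (hlim_calX_meas WU); apply: filterS _ (WP _ ltr01) => E [].
- move=> e We; move: Lhyp.1 => /closed_mdistP; apply=> z z0.
  have z2 : 0 < z / 2 by rewrite divr_gt0.
  have [E [WE [_ [_ [F [_ FL] EF]]]]] :=
    filter_ex (filterI (hlim_hball cX WU z2) (WP _ z2)).
  have [e' Ee' ee'] := WE.1 e We; have [l Ll e'l] := FL.2 e' (EF _ Ee').
  by exists l => //; rewrite [z]splitr; exact: mdist_ltD ee' e'l.
- by apply: (pi_hlim WU Wh) => d d0; apply: filterS _ (WP _ d0) => E [_ [Ex _]].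
Qed.

Lemma hcompact_calV : hcompact (calV pi nu).
Proof. by apply: (hcompact_ultra cX) => [F []|U UU]; last exact: hlim_calV. Qed.

End fibres.

Lemma gmulVr {G : Type} (Gr : group_law G) (g : G) : gmul Gr g (ginv Gr g) = gone Gr.
Proof.
set h := ginv Gr g.
have -> : gmul Gr g h = gmul Gr (gmul Gr (ginv Gr h) h) (gmul Gr g h).
  by rewrite gmulV gmul1.
by rewrite -gmulA (gmulA Gr h g h) gmulV gmul1 gmulV.
Qed.

Section action.
Context {G : Type} (Gr : group_law G) {T : topologicalType} (act : G -> T -> T).
Hypothesis actP : is_action Gr act.

Lemma actK (g : G) : cancel (act g) (act (ginv Gr g)).
Proof. by case: actP => act1 actM _ x; rewrite -actM gmulV act1. Qed.

Lemma actVK (g : G) : cancel (act (ginv Gr g)) (act g).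
Proof. by case: actP => act1 actM _ x; rewrite -actM gmulVr act1. Qed.

End action.

Section invariance.
Context {R : realType} {G : Type} (Gr : group_law G) {X : metricType R}
  (act : G -> X -> X) {Xeq : pmetricType R} (acteq : G -> Xeq -> Xeq)
  (pi : X -> Xeq) (nu : probability (borel_type Xeq) R).
Hypotheses (cX : compact [set: X]) (pic : continuous pi)
  (actP : is_action Gr act) (acteqP : is_action Gr acteq)
  (pi_act : forall g x, pi (act g x) = acteq g (pi x))
  (nu_inv : invariant_prob acteq nu).

Lemma hball_hact (g : G) (eps : R) : 0 < eps -> exists2 d : R, 0 < d &
  forall E F, hball d E F -> hball eps (hact act g E) (hact act g F).
Proof.
move=> e0; have actc : continuous (act g) by case: actP.
have [d d0 dact] := compact_unif_cont cX actc e0.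
have near_act E F : hnear d E F -> hnear eps (hact act g E) (hact act g F).
  move=> EF _ [x Ex <-]; have [y Fy xy] := EF x Ex.
  by exists (act g y); [exists y|exact: dact].
by exists d => // E F [EF FE]; split; exact: near_act.
Qed.

Lemma hact_fibre (g : G) (y : Xeq) :
  hact act g (pi @^-1` [set y]) = pi @^-1` [set acteq g y].
Proof.
apply/seteqP; split=> [_ [x /= xy <-]|z /= zy]; first by rewrite /= pi_act xy.
by exists (act (ginv Gr g) z); rewrite ?actVK //= pi_act zy actK.
Qed.

Lemma hyp_hact (g : G) (E : set X) : hyp E -> hyp (hact act g E).
Proof.
move=> [Ecl [x Ex]]; split; last by exists (act g x), x.
apply: compact_closed; first exact: metric_hausdorff.
apply: continuous_compact; last exact: subclosed_compact Ecl cX (fun _ _ => I).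
by apply: continuous_subspaceT; case: actP.
Qed.

Lemma calX_hact (g : G) (E : set X) : calX pi E -> calX pi (hact act g E).
Proof.
move=> [Ehyp Efib]; split=> [|e e0]; first exact: hyp_hact.
have [d d0 dact] := hball_hact g e0; have [y Ey] := Efib d d0.
by exists (acteq g y); rewrite -hact_fibre; exact: dact.
Qed.

Lemma pi_hact (g : G) (E : set X) (y : Xeq) :
  pi @` E = [set y] -> pi @` hact act g E = [set acteq g y].
Proof.
move=> piE; apply/seteqP; split=> [_ [_ [x Ex <-] <-]|_ ->].
  have : (pi @` E) (pi x) by exists x.
  by rewrite piE /= pi_act => ->.
have : (pi @` E) y by rewrite piE.
by case=> x Ex <-; exists (act g x); [exists x|rewrite pi_act].
Qed.

Lemma calX_meas_hact (g : G) (E : set X) :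
  calX_meas pi nu E -> calX_meas pi nu (hact act g E).
Proof.
move=> [XE Enu]; split=> [|e e0]; first exact: calX_hact.
have [d d0 dact] := hball_hact g e0; apply: lt_le_trans (Enu d d0) _.
have mB := measurable_piX_ball cX pic e (hyp_hact g XE.1).
rewrite -(nu_inv g mB); apply: le_measure.
- by apply/mem_set; have := measurable_piX_ball cX pic d XE.1.
- by apply/mem_set; apply: continuous_borel_preimage mB; case: acteqP.
move=> y [F [XF EF piF]]; exists (hact act g F); split.
- exact: calX_hact.
- exact: dact.
- exact: pi_hact.
Qed.

Lemma calV_hact (g : G) (F : set X) : calV pi nu F -> calV pi nu (hact act g F).
Proof.
move=> [Fhyp VF]; split; first exact: hyp_hact.
apply/seteqP; split=> [|_ [_ [x Fx <-] <-]]; first exact: Vset_sub_image.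
have : (pi @` F) (pi x) by exists x.
rewrite -VF pi_act => -[E [ME EF piE]]; exists (hact act g E); split.
- exact: calX_meas_hact.
- by move=> _ [z Ez <-]; exists z => //; exact: EF.
- exact: pi_hact.
Qed.

Lemma hactK (g : G) (F : set X) : hact act g (hact act (ginv Gr g) F) = F.
Proof.
apply/seteqP; split=> [_ [_ [x Fx <-] <-]|x Fx]; first by rewrite (actVK actP).
by exists (act (ginv Gr g) x); [exists x|rewrite (actVK actP)].
Qed.

Lemma hact_calV (g : G) : [set hact act g F | F in calV pi nu] = calV pi nu.
Proof.
apply/seteqP; split=> [_ [F VF <-]|F VF]; first exact: calV_hact.
by exists (hact act (ginv Gr g) F); [exact: calV_hact|exact: hactK].
Qed.

End invariance.

Theorem lemma3p7 (R : realType) (G : countType) (Gr : group_law G)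
  (X : metricType R) (act : G -> X -> X)
  (Xeq : pmetricType R) (acteq : G -> Xeq -> Xeq) (pi_eq : X -> Xeq)
  (nu_eq : probability (borel_type Xeq) R) :
  infinite_countable_group Gr ->
  tds Gr act -> minimal act ->
  max_equicontinuous_factor Gr act acteq pi_eq ->
  unique_invariant_prob acteq nu_eq ->
  hcompact (calV pi_eq nu_eq) /\
  forall g : G, [set hact act g F | F in calV pi_eq nu_eq] = calV pi_eq nu_eq.
Proof.
move=> _ [cX actP] _ [[_ acteqP] _ [pic _ pi_act] _] [nu_inv _].
split; first exact: hcompact_calV nu_eq cX pic.
by move=> g; exact: hact_calV cX pic actP acteqP pi_act nu_inv g.
Qed.
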